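(* Let $n$ and $k$ be integers with $3\le k\le n-1$, and let $CT\in\mathcal{CT}_{n,k}$. Then \[ M_1(CT)\le\begin{cases}4n+2k-10 & \text{if } k\equiv 0 \pmod 3,\\ 4n+2k-8 & \text{if } k\equiv 1 \pmod 3,\\ 4n+2k-12 & \text{if } k\equiv 2 \pmod 3.\end{cases} \] Equality holds if and only if $CT$ contains exactly one vertex of degree $3$ when $k\equiv 0 \pmod 3$, no vertex of degree $3$ when $k\equiv 1\pmod 3$, and exactly two vertices of degree $3$ when $k\equiv 2\pmod 3$.
   Context: All graphs are simple and connected. A chemical tree is a tree with maximum degree at most $4$. $d_v$ denotes the degree of a vertex $v$. A vertex of degree $1$ is pendent; a vertex of degree greater than $2$ is branching. A segment of a tree $T$ is a path of positive length in $T$ neither of whose end vertices has degree $2$ and all of whose internal vertices (if any) have degree $2$. $\mathcal{CT}_{n,k}$ denotes the class of all $n$-vertex chemical trees having exactly $k$ segments. The first Zagreb index is $M_1(G)=\sum_{v\in V(G)}d_v^2$. *)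

From mathcomp Require Import all_boot.
Set Implicit Arguments. Unset Strict Implicit. Unset Printing Implicit Defensive.

Section Graphs.
Variables (T : finType) (e : rel T).

(* simple graph: e symmetric and irreflexive (assumed in the theorem) *)
Definition deg (v : T) : nat := #|[set w | e v w]|.

Definition connected_graph : Prop := forall x y : T, connect e x y.

Definition acyclic : Prop :=
  forall (x : T) (p : seq T), uniq (x :: p) -> 2 <= size p -> ~~ cycle e (x :: p).

Definition is_tree : Prop := connected_graph /\ acyclic.

Definition chemical : Prop := forall v : T, deg v <= 4.

Definition is_segment (u : T) (p : seq T) : bool :=
  [&& path e u p, uniq (u :: p), p != [::],
      deg u != 2, deg (last u p) != 2 &
      all (fun x => deg x == 2) (behead (belast u p))].

(* In a tree a path is determined by its end vertices, so a segment is
   identified with the (unordered) pair of its end vertices. *)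
Definition segment_ends (S : {set T}) : Prop :=
  exists u p, is_segment u p /\ S = [set u; last u p].

Definition num_segments (k : nat) : Prop :=
  exists L : seq {set T}, [/\ uniq L, size L = k & forall S, S \in L <-> segment_ends S].

Definition M1 : nat := \sum_(v : T) deg v ^ 2.

End Graphs.

Definition M1_bound (n k : nat) : nat :=
  if k %% 3 == 0 then 4 * n + 2 * k - 10
  else if k %% 3 == 1 then 4 * n + 2 * k - 8
  else 4 * n + 2 * k - 12.

Definition num_deg3_extremal (k : nat) : nat :=
  if k %% 3 == 0 then 1 else if k %% 3 == 1 then 0 else 2.

From mathcomp Require Import all_boot zify.
Set Implicit Arguments. Unset Strict Implicit. Unset Printing Implicit Defensive.

(* For 1 <= d <= 4 one has d^2 + 6 + 2[d = 3] = 5d + 2[d != 2] and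
   [d != 2] + d = 2 + 2[d = 3] + 3[d = 4].  Summing over the vertices and using
   the handshake identity sum d = 2(n - 1) gives, with w the number of vertices
   of degree other than 2 and n_i the number of vertices of degree i,
   M1 = 4n + 2w - 10 - 2 n_3  and  w - 2 = 2 n_3 + 3 n_4.
   Rooting the tree at a vertex r of degree other than 2, the segments are in
   bijection with the other such vertices v, via v |-> {v, nearest proper
   ancestor of v of degree other than 2}; hence k = w - 1.  So
   M1 = 4n + 2k - 8 - 2 n_3 with 2 n_3 + 3 n_4 = k - 1, and the latter forces
   n_3 >= 1, 0, 2 according as k = 0, 1, 2 (mod 3). *)

Lemma sum_nat_boolE (T : finType) (P : pred T) : \sum_x (P x : nat) = #|[set x | P x]|.
Proof. by rewrite -sum1dep_card [RHS]big_mkcond. Qed.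

Lemma sum_andb_eq (T : finType) (b : bool) (a : T) : \sum_x (b && (x == a) : nat) = b.
Proof. by rewrite (bigD1 a) //= eqxx andbT big1 ?addn0 // => x /negbTE ->; rewrite andbF. Qed.

Section ChemicalDegrees.
Variables (T : finType) (d : T -> nat).
Hypothesis d_range : forall v, 0 < d v <= 4.

Lemma sum_sqr_degrees :
  \sum_v d v ^ 2 + 6 * #|T| + 2 * #|[set v | d v == 3]| =
  5 * \sum_v d v + 2 * #|[set v | d v != 2]|.
Proof.
rewrite -!sum_nat_boolE !big_distrr /= [6 * _]mulnC -sum_nat_const -!big_split /=.
by apply: eq_bigr => v _; have := d_range v; case: (d v) => [|[|[|[|[|]]]]].
Qed.

Lemma sum_degrees :
  #|[set v | d v != 2]| + \sum_v d v =
  2 * #|T| + 2 * #|[set v | d v == 3]| + 3 * #|[set v | d v == 4]|.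
Proof.
rewrite -!sum_nat_boolE !big_distrr /= [2 * #|T|]mulnC -sum_nat_const -!big_split /=.
by apply: eq_bigr => v _; have := d_range v; case: (d v) => [|[|[|[|[|]]]]].
Qed.

End ChemicalDegrees.

Lemma M1_boundE n k : 2 <= n -> 2 <= k ->
  M1_bound n k = 4 * n + 2 * k - 8 - 2 * num_deg3_extremal k.
Proof. by rewrite /M1_bound /num_deg3_extremal; case: ifP; [|case: ifP]; lia. Qed.

Lemma num_deg3_extremal_le k n3 n4 : 0 < k -> 2 * n3 + 3 * n4 = k - 1 -> num_deg3_extremal k <= n3.
Proof. by rewrite /num_deg3_extremal; case: ifP; [|case: ifP]; lia. Qed.

Lemma deg_gt0 (T : finType) (e : rel T) v : connected_graph e -> 1 < #|T| -> 0 < deg e v.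
Proof.
move=> e_conn nontrivial; have /card_gt0P[w /[!inE] w_v] : 0 < #|predC1 v| by rewrite cardC1; lia.
have /connectP[[|y p] /= vp w_last] := e_conn v w; first by rewrite w_last eqxx in w_v.
by apply/card_gt0P; exists y; rewrite inE; case/andP: vp.
Qed.

Section RootedTree.
Variables (T : finType) (e : rel T).
Hypotheses (e_sym : symmetric e) (e_irr : irreflexive e).
Hypotheses (e_conn : connected_graph e) (e_acyc : acyclic e).
Variable r : T.

Fixpoint ball n : {set T} :=
  if n is n'.+1 then ball n' :|: [set y | [exists x in ball n', e x y]] else [set r].

Lemma ball_edge n x y : x \in ball n -> e x y -> y \in ball n.+1.
Proof. by move=> xn xy; rewrite /= !inE; apply/orP; right; apply/existsP; exists x; rewrite xn. Qed.

Lemma ball_path n x p : x \in ball n -> path e x p -> last x p \in ball (n + size p).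
Proof.
elim: p n x => [|y p IHp] n x xn /=; first by rewrite addn0.
by case/andP=> xy yp; rewrite addnS -addSn; apply: IHp yp; apply: ball_edge xy.
Qed.

Lemma exists_ball v : exists n, v \in ball n.
Proof.
have /connectP[p rp ->] := e_conn r v.
by exists (0 + size p); apply: ball_path rp; rewrite inE.
Qed.

Definition depth v := ex_minn (exists_ball v).

Lemma ball_depth v : v \in ball (depth v).
Proof. by rewrite /depth; case: ex_minnP. Qed.

Lemma depth_min n v : v \in ball n -> depth v <= n.
Proof. by rewrite /depth; case: ex_minnP => m _; apply. Qed.

Lemma depth_edge x y : e x y -> depth y <= (depth x).+1.
Proof. by move=> xy; apply/depth_min/(ball_edge (ball_depth x)). Qed.

Lemma depth_eq0 v : (depth v == 0) = (v == r).
Proof.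
apply/eqP/eqP => [v0 | ->]; first by have := ball_depth v; rewrite v0 inE => /eqP.
by apply/eqP; rewrite -leqn0 depth_min // inE.
Qed.

Lemma depth_root : depth r = 0.
Proof. by apply/eqP; rewrite depth_eq0. Qed.

Lemma exists_parent x : x != r -> exists y, e x y && ((depth y).+1 == depth x).
Proof.
rewrite -depth_eq0; have := ball_depth x; case dx: (depth x) => [|d] //= + _.
rewrite inE => /orP[xd | /[!inE] /existsP[y /andP[yd yx]]].
  by have := depth_min xd; rewrite dx ltnn.
exists y; rewrite e_sym yx eqSS eqn_leq depth_min //=.
by have := depth_edge yx; rewrite dx.
Qed.

Definition parent x := odflt x [pick y | e x y && ((depth y).+1 == depth x)].

Lemma parent_root : parent r = r.
Proof. by rewrite /parent; case: pickP => // y /andP[_]; rewrite depth_root. Qed.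

Lemma parent_spec x : x != r -> e x (parent x) /\ (depth (parent x)).+1 = depth x.
Proof.
move=> xr; rewrite /parent; case: pickP => [y /andP[xy /eqP //] | none].
by have [y] := exists_parent xr; rewrite none.
Qed.

Lemma depth_parent x : depth (parent x) = (depth x).-1.
Proof.
have [-> | xr] := eqVneq x r; first by rewrite parent_root depth_root.
by have [_ <-] := parent_spec xr.
Qed.

Lemma depth_iter_parent i x : depth (iter i parent x) = depth x - i.
Proof. by elim: i => [|i IHi]; rewrite ?subn0 // iterS depth_parent IHi subnS. Qed.

Lemma iter_depth_root x : iter (depth x) parent x = r.
Proof. by apply/eqP; rewrite -depth_eq0 depth_iter_parent subnn. Qed.

Lemma path_climb_depth n x : n <= depth x ->
  path [rel a b | e a b && (depth b < depth a)] x (traject parent (parent x) n).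
Proof.
elim: n x => [|n IHn] x //= lt_n_x.
have xr : x != r by rewrite -depth_eq0 -lt0n (leq_ltn_trans _ lt_n_x).
have [x_px <-] := parent_spec xr.
by rewrite /= x_px ltnSn IHn // -ltnS (parent_spec xr).2.
Qed.

Lemma path_climb n x : n <= depth x -> path e x (traject parent (parent x) n).
Proof. by move/path_climb_depth; apply: sub_path => a b /andP[]. Qed.

Lemma uniq_climb n x : n <= depth x -> uniq (traject parent x n.+1).
Proof.
move/path_climb_depth=> climb; rewrite trajectS.
apply: (@sorted_uniq _ [rel a b | depth b < depth a]) => [a b c /= ba cb | a /= | ].
- exact: ltn_trans ba.
- exact: ltnn.
by apply: sub_path climb => a b /andP[].
Qed.

Lemma belast_traject (f : T -> T) x n : belast x (traject f (f x) n) = traject f x n.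
Proof. by elim: n x => //= n IHn x; rewrite IHn. Qed.

Lemma depth_traject x n y : y \in traject parent x n -> depth y <= depth x.
Proof. by case/trajectP=> i _ ->; rewrite depth_iter_parent leq_subr. Qed.

(* Glue the climbs from [a] and [b] up to their first common ancestor. *)
Lemma detour a b : a != b -> depth a = depth b ->
  exists q, [/\ path e a q, last a q = b, uniq (a :: q), 1 < size q &
                all (fun y => depth y <= depth a) q].
Proof.
move=> ab dab.
have meets : exists j, iter j parent a == iter j parent b.
  by exists (depth a); rewrite iter_depth_root dab iter_depth_root.
case: (ex_minnP meets) => -[|j] /eqP meet min_meet; first by move: ab; rewrite [a]meet eqxx.
have le_j_a : j < depth a by apply: min_meet; rewrite iter_depth_root dab iter_depth_root.
have apart i i' : i <= j.+1 -> i' <= j -> iter i parent a != iter i' parent b.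
  move=> le_i le_i'; apply/eqP=> same.
  have := congr1 depth same; rewrite !depth_iter_parent -dab => eq_i.
  have eq_i' : i = i' by lia.
  by subst i; have := min_meet i'; rewrite same eqxx => /(_ isT); lia.
exists (traject parent (parent a) j.+1 ++ rev (traject parent b j.+1)); split.
- rewrite cat_path path_climb // last_traject meet -last_traject.
  rewrite -[traject parent b _]belast_traject rev_path.
  by rewrite (@eq_path _ _ e) ?path_climb -?dab // => x y; apply: e_sym.
- by rewrite last_cat trajectS rev_cons last_rcons.
- rewrite -cat_cons -trajectS cat_uniq rev_uniq !uniq_climb -?dab ?andbT //; last exact: ltnW.
  apply/hasPn=> _ /[!mem_rev] /trajectP[i' lt_i' ->].
  by apply/negP=> /trajectP[i lt_i /eqP]; rewrite eq_sym; apply/negP/apart.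
- by rewrite size_cat size_rev !size_traject addnS.
rewrite all_cat all_rev; apply/andP; split; apply/allP=> y y_in.
  by apply: (depth_traject (n := j.+2)); rewrite trajectS inE y_in orbT.
by rewrite dab; apply: depth_traject y_in.
Qed.

Lemma edge_neq a b : e a b -> a != b.
Proof. by apply: contraTneq => ->; rewrite e_irr. Qed.

Lemma depth_edge_neq a b : e a b -> depth a != depth b.
Proof.
move=> ab; apply/eqP=> dab; have [q [aq qb uq sq _]] := detour (edge_neq ab) dab.
by have /negP[] := e_acyc uq sq; rewrite /= rcons_path aq qb e_sym.
Qed.

Lemma lower_neighbor_unique x a b : e x a -> e x b ->
  depth a = depth b -> depth a < depth x -> a = b.
Proof.
move=> xa xb dab ax; apply/eqP/negP=> /negP ab.
have [q [aq qb uq sq low]] := detour ab dab.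
have x_notin : x \notin a :: q.
  apply/negP=> /[1!inE] /orP[/eqP xa' | /(allP low)]; last by rewrite leqNgt ax.
  by rewrite xa' ltnn in ax.
have /negP[] : ~~ cycle e (x :: a :: q).
  by apply: e_acyc; [rewrite cons_uniq x_notin | exact: ltnW].
by rewrite /= rcons_path xa aq qb e_sym xb.
Qed.

Lemma edge_parent x y : e x y -> y = parent x \/ x = parent y.
Proof.
wlog lt_yx : x y / depth y < depth x => [sym_case xy | ].
  case: (ltngtP (depth x) (depth y)) => [lt_xy | lt_yx | eq_xy].
  - by rewrite e_sym in xy; case: (sym_case y x lt_xy xy); [right | left].
  - exact: sym_case.
  - by have := depth_edge_neq xy; rewrite eq_xy eqxx.
move=> xy; left; have xr : x != r by rewrite -depth_eq0 -lt0n (leq_ltn_trans _ lt_yx).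
have [x_px d_px] := parent_spec xr.
apply: (lower_neighbor_unique xy x_px _ lt_yx).
by have := depth_edge xy; rewrite e_sym in xy; have := depth_edge xy; lia.
Qed.

Lemma parent_neq_root v : v != parent v -> v != r.
Proof. by apply: contraNneq => ->; rewrite parent_root. Qed.

Lemma edgeE v w :
  e v w = ((v != r) && (w == parent v)) + ((w != r) && (v == parent w)) :> nat.
Proof.
have parent_edge a b : (a != r) && (b == parent a) -> e a b.
  by case/andP=> ar /eqP ->; have [] := parent_spec ar.
case: (boolP ((v != r) && _)) => [up | not_up]; case: (boolP ((w != r) && _)) => [down | not_down].
- case/andP: up => vr /eqP wv; case/andP: down => wr /eqP vw.
  by have [_] := parent_spec vr; have [_] := parent_spec wr; rewrite -wv -vw; lia.
- by rewrite parent_edge.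
- by rewrite e_sym parent_edge.
case vw: (e v w) => //; case: (edge_parent vw) => [wv | vw'].
  by rewrite wv eqxx andbT parent_neq_root // -wv edge_neq in not_up.
by rewrite vw' eqxx andbT parent_neq_root // -vw' eq_sym edge_neq in not_down.
Qed.

Lemma sum_deg_tree : \sum_v deg e v = 2 * #|T|.-1.
Proof.
under eq_bigr do rewrite /deg -sum_nat_boolE.
under eq_bigr do under eq_bigr do rewrite edgeE.
under eq_bigr do rewrite big_split /=.
rewrite big_split /= [X in _ + X]exchange_big /=.
under eq_bigr do rewrite sum_andb_eq.
rewrite addnn -mul2n sum_nat_boolE -(cardsC1 r); congr (2 * _).
by apply: eq_card => v; rewrite !inE.
Qed.

Lemma deg_ge3 y a b c : e y a -> e y b -> e y c -> a != b -> a != c -> b != c -> 3 <= deg e y.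
Proof.
move=> ya yb yc ab ac bc; rewrite -[3](_ : #|[set a; b; c]| = 3).
  by apply/subset_leq_card/subsetP=> x; rewrite !inE => /orP[/orP[]|] /eqP ->.
by rewrite -setUA cardsU1 cards2 bc !inE negb_or ab ac.
Qed.

Lemma deg2_child_unique y u z : y != r -> deg e y = 2 -> parent u = y -> parent z = y -> u = z.
Proof.
move=> yr y2 uy zy; apply/eqP/negP=> /negP uz.
have ur : u != r by apply: contra_neq yr => ur; rewrite -uy ur parent_root.
have zr : z != r by apply: contra_neq yr => zr; rewrite -zy zr parent_root.
have [u_pu d_pu] := parent_spec ur; have [z_pz d_pz] := parent_spec zr.
have [y_py d_py] := parent_spec yr.
rewrite uy e_sym in u_pu; rewrite zy e_sym in z_pz; rewrite uy in d_pu; rewrite zy in d_pz.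
have pu : u != parent y by apply/eqP=> u_py; rewrite u_py in d_pu; lia.
have pz : z != parent y by apply/eqP=> z_py; rewrite z_py in d_pz; lia.
by have := deg_ge3 u_pu z_pz y_py uz pu pz; rewrite y2.
Qed.

Lemma path_descends x p : path e x p -> uniq (x :: p) -> x = parent (head x p) ->
  path (fun a b => a == parent b) x p.
Proof.
elim: p x => [|y p IHp] x //= /andP[xy yp] /andP[x_notin uniq_yp] x_py.
rewrite -x_py eqxx /=.
case: p IHp yp x_notin uniq_yp => [|z p] IHp // yp x_notin uniq_yp.
apply: IHp => //=; case/andP: yp => yz _; case: (edge_parent yz) => // zy.
by move: x_notin; rewrite x_py -zy !inE eqxx orbT.
Qed.

Section Segments.
Hypothesis root_end : deg e r != 2.

Definition ends := [set v | deg e v != 2].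

Lemma exists_end_above v : exists i, iter i.+1 parent v \in ends.
Proof.
exists (depth v).-1; have [-> | vr] := eqVneq v r; first by rewrite depth_root /= parent_root inE.
by rewrite prednK ?iter_depth_root ?inE // lt0n depth_eq0.
Qed.

Definition climb_len v := ex_minn (exists_end_above v).
Definition end_above v := iter (climb_len v).+1 parent v.

Lemma end_above_in v : end_above v \in ends.
Proof. by rewrite /end_above /climb_len; case: ex_minnP. Qed.

Lemma climb_len_min v i : iter i.+1 parent v \in ends -> climb_len v <= i.
Proof. by rewrite /climb_len; case: ex_minnP => m _; apply. Qed.

Lemma climb_len_lt v : v != r -> climb_len v < depth v.
Proof.
rewrite -depth_eq0 -lt0n => v_deep; rewrite -(prednK v_deep) ltnS climb_len_min //.
by rewrite prednK // iter_depth_root inE.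
Qed.

Lemma depth_end_above v : v != r -> depth (end_above v) < depth v.
Proof. by move/climb_len_lt; rewrite /end_above depth_iter_parent; lia. Qed.

Lemma is_segment_climb v : v \in ends -> v != r ->
  is_segment e v (traject parent (parent v) (climb_len v).+1).
Proof.
rewrite inE => v_end vr; have v_deep := climb_len_lt vr.
apply/and5P; split=> //; first exact: path_climb.
  by rewrite -trajectS uniq_climb // ltnW.
have := end_above_in v; rewrite inE last_traject => -> /=.
rewrite belast_traject /=; apply/allP=> _ /trajectP[i lt_i ->].
by apply: contraLR lt_i; rewrite -leqNgt -iterSr => i_end; apply: climb_len_min; rewrite inE.
Qed.

Lemma deg2_path_climbs u p : path e u p -> uniq (u :: p) ->
  all (fun x => deg e x == 2) (behead (belast u p)) -> head u p = parent u -> fpath parent u p.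
Proof.
elim: p u => [|y p IHp] u //= /andP[uy yp] /andP[u_notin uniq_yp] deg2 y_pu.
rewrite -y_pu eqxx /=.
case: p IHp yp u_notin uniq_yp deg2 => [|z p] IHp // yp u_notin uniq_yp /andP[/eqP y2 deg2].
apply: IHp => //=; case/andP: yp => yz _; case: (edge_parent yz) => [// | y_pz].
have yr : y != r by apply: contra_neq root_end => <-.
by move: u_notin; rewrite (deg2_child_unique yr y2 (esym y_pu) (esym y_pz)) !inE eqxx orbT.
Qed.

Lemma climbing_segment_end u p : is_segment e u p -> head u p = parent u ->
  u != r /\ last u p = end_above u.
Proof.
move=> seg head_up; case/and5P: (seg) => up uniq_up p_nil _ /andP[last_end deg2].
have /fpathE p_climb := deg2_path_climbs up uniq_up deg2 head_up.
move: up p_nil last_end deg2; rewrite p_climb; case: (size p) => [|n] // /andP[u_pu _] _.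
rewrite last_traject belast_traject trajectS => n_end /= deg2.
split; first by apply: contraTneq u_pu => ->; rewrite parent_root e_irr.
rewrite /end_above iterS; congr (parent (iter _ _ _)); apply/eqP.
rewrite eqn_leq climb_len_min ?inE ?andbT // leqNgt; apply/negP=> lt_n.
have /[!inE] /negP[] := end_above_in u.
by apply: (allP deg2); apply/trajectP; exists (climb_len u); rewrite // /end_above iterSr.
Qed.

Lemma is_segment_rev u q w : is_segment e u (rcons q w) -> is_segment e w (rcons (rev q) u).
Proof.
case/and5P=> uqw uniq_uqw _ u_end /andP[w_end deg2].
rewrite last_rcons in w_end; rewrite belast_rcons /= in deg2.
apply/and5P; split=> //.
- have := rev_path e u (rcons q w); rewrite last_rcons belast_rcons rev_cons => ->.
  by rewrite (@eq_path _ _ e) // => x y; apply: e_sym.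
- by rewrite -rev_cons -rev_rcons rev_uniq rcons_cons.
- by case: (rev q).
by rewrite last_rcons u_end belast_rcons /= all_rev.
Qed.

Lemma segment_endsP S : segment_ends e S -> exists2 v, v \in ends :\ r & S = [set v; end_above v].
Proof.
case=> u [p [seg ->]]; case/and5P: (seg) => up uniq_up p_nil u_end _.
have first_edge : e u (head u p) by case: p {seg uniq_up} up p_nil => //= y p /andP[].
case: (edge_parent first_edge) => [head_up | down].
  have [ur ->] := climbing_segment_end seg head_up.
  by exists u; rewrite // !inE ur.
have := path_descends up uniq_up down.
case/lastP: p seg {up uniq_up p_nil first_edge down} => // q w seg.
rewrite rcons_path last_rcons => /andP[_ /eqP last_q].
have head_w : head w (rcons (rev q) u) = parent w by rewrite -rev_cons lastI rev_rcons.
have [wr w_top] := climbing_segment_end (is_segment_rev seg) head_w.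
rewrite last_rcons in w_top; case/and5P: seg => _ _ _ _ /andP[/[!last_rcons] w_end _].
by exists w; rewrite ?inE ?wr // setUC w_top.
Qed.

Lemma end_above_pair_inj : {in ends :\ r &, injective (fun v => [set v; end_above v])}.
Proof.
move=> v v' /setD1P[vr _] /setD1P[v'r _] /= same.
have : v \in [set v'; end_above v'] by rewrite -same !inE eqxx.
have : v' \in [set v; end_above v] by rewrite same !inE eqxx.
rewrite !inE => /orP[/eqP -> // | /eqP v'_top] /orP[/eqP -> // | /eqP v_top].
by have := depth_end_above vr; have := depth_end_above v'r; rewrite -v'_top -v_top; lia.
Qed.

Lemma num_segments_card_ends k : num_segments e k -> k = #|ends| - 1.
Proof.
case=> L [uniq_L <- L_segs]; rewrite -(card_uniqP uniq_L) -(cardsE (mem L)).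
have -> : [set S in L] = [set [set v; end_above v] | v in ends :\ r].
  apply/setP=> S; rewrite inE; apply/idP/imsetP => [/L_segs/segment_endsP // | [v v_in ->]].
  apply/L_segs; exists v, (traject parent (parent v) (climb_len v).+1).
  by case/setD1P: v_in => vr v_end; rewrite last_traject is_segment_climb.
rewrite card_in_imset; last exact: end_above_pair_inj.
by rewrite (cardsD1 r ends) inE root_end; lia.
Qed.

End Segments.

End RootedTree.

Theorem theorem1 (T : finType) (e : rel T) (k : nat) :
  symmetric e -> irreflexive e ->
  is_tree e -> chemical e -> num_segments e k ->
  3 <= k -> k <= #|T| - 1 ->
  M1 e <= M1_bound #|T| k /\
  (M1 e = M1_bound #|T| k <-> #|[set v | deg e v == 3]| = num_deg3_extremal k).
Proof.
move=> e_sym e_irr [e_conn e_acyc] chem segs k_ge3 k_le.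
have /card_gt0P[v0 _] : 0 < #|T| by lia.
have deg_range v : 0 < deg e v <= 4 by rewrite deg_gt0 ?chem //; lia.
have := sum_sqr_degrees deg_range; have := sum_degrees deg_range.
rewrite -/(M1 e) (sum_deg_tree e_sym e_irr e_conn e_acyc v0).
set n3 := #|[set v | deg e v == 3]|; set n4 := #|[set v | deg e v == 4]|.
set w := #|[set v | deg e v != 2]| => deg_count sqr_count.
have /card_gt0P[r /[!inE] r_end] : 0 < w by lia.
have k_ends : k = w - 1 := num_segments_card_ends e_sym e_irr e_conn e_acyc r_end segs.
have M1E : M1 e + 2 * n3 = 4 * #|T| + 2 * k - 8 by lia.
have extremal_le : num_deg3_extremal k <= n3.
  by apply: (num_deg3_extremal_le (n4 := n4)); lia.
by rewrite M1_boundE; lia.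
Qed.
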